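(* Let $R$ be a commutative ring, $A$ an $R$-algebra and $n,m$ positive integers. If $A^n$ can be generated by $m$ elements as an $R$-algebra, then $A^{n+1}$ can be generated by $m+1$ elements as an $R$-algebra. Consequently, if $\mathrm{gen}_m(A,R)$ is finite then the smallest number of generators of $A^{1+\mathrm{gen}_m(A,R)}$ as an $R$-algebra equals $m+1$.
   Context: Algebras are associative and unital; $A^n$ is the direct product of $n$ copies of $A$. $\mathrm{gen}_m(A,R)$ is the largest $k\in\mathbb Z\cup\{\infty\}$ such that $A^k$ can be generated by at most $m$ elements as an $R$-algebra. *)

From HB Require Import structures.
From mathcomp Require Import all_boot all_order all_algebra.
Set Implicit Arguments. Unset Strict Implicit. Unset Printing Implicit Defensive.
Import GRing.Theory.
Local Open Scope ring_scope.

(* A^n, the direct product of n copies of A, is represented by the finite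
   functions {ffun 'I_n -> A}, with MathComp's pointwise ring operations
   and pointwise scalar multiplication by R. *)

(* The R-subalgebra of A^n generated by the elements of s: the smallest
   subset containing s and 1, closed under +, *, and scaling by R
   (0 = 0 *: 1 and -x = (-1) *: x are then included). *)
Inductive in_subalg (R : comPzRingType) (A : algType R) (n : nat)
    (s : seq {ffun 'I_n -> A}) : {ffun 'I_n -> A} -> Prop :=
  | sa_gen x : x \in s -> in_subalg s x
  | sa_one : in_subalg s 1
  | sa_add x y : in_subalg s x -> in_subalg s y -> in_subalg s (x + y)
  | sa_mul x y : in_subalg s x -> in_subalg s y -> in_subalg s (x * y)
  | sa_scale (r : R) x : in_subalg s x -> in_subalg s (r *: x).

Definition gen_by (R : comPzRingType) (A : algType R) (n m : nat) : Prop :=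
  exists s : seq {ffun 'I_n -> A},
    (size s <= m)%N /\ forall x : {ffun 'I_n -> A}, in_subalg s x.

(* gen_m(A,R) is finite and equal to k: k is the largest natural number
   such that A^k is generated by at most m elements. *)
Definition gen_eq (R : comPzRingType) (A : algType R) (m k : nat) : Prop :=
  gen_by A k m /\ forall k' : nat, (k < k')%N -> ~ gen_by A k' m.

Definition min_gens (R : comPzRingType) (A : algType R) (n g : nat) : Prop :=
  gen_by A n g /\ forall g' : nat, (g' < g)%N -> ~ gen_by A n g'.

From HB Require Import structures.
From mathcomp Require Import all_boot all_order all_algebra.
Set Implicit Arguments. Unset Strict Implicit. Unset Printing Implicit Defensive.
Import GRing.Theory.
Local Open Scope ring_scope.

(* If g_1, ..., g_m generate A^(n+1), then the idempotent e = (0, ..., 0, 1)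
   together with the "last coordinate doubled" copies (g_i, g_i(n+1)) generate
   A^(n+2): doubling a coordinate is a unital algebra map, so it carries the
   whole of A^(n+1) into the new subalgebra, and any z in A^(n+2) is
   (1 - e) x + e y for two such doubled elements x and y. *)

Section GeneratedSubalgebra.
Variables (R : comPzRingType) (A : algType R).

Lemma in_subalg_sub n (s : seq {ffun 'I_n -> A}) x y :
  in_subalg s x -> in_subalg s y -> in_subalg s (x - y).
Proof. by move=> sx sy; rewrite -scaleN1r; apply: sa_add => //; apply: sa_scale. Qed.

Lemma gen_by_leq n g g' : (g <= g')%N -> gen_by A n g -> gen_by A n g'.
Proof. by move=> le_gg' [s [sz_s gen_s]]; exists s; split=> //; apply: leq_trans le_gg'. Qed.

End GeneratedSubalgebra.

Section Reindexing.
Variables (R : comPzRingType) (A : algType R) (k n : nat) (p : 'I_k -> 'I_n).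

Definition ffun_comp (x : {ffun 'I_n -> A}) : {ffun 'I_k -> A} :=
  [ffun i => x (p i)].

Lemma ffun_comp1 : ffun_comp 1 = 1.
Proof. by apply/ffunP=> i; rewrite !ffunE. Qed.

Lemma ffun_compD x y : ffun_comp (x + y) = ffun_comp x + ffun_comp y.
Proof. by apply/ffunP=> i; rewrite !ffunE. Qed.

Lemma ffun_compM x y : ffun_comp (x * y) = ffun_comp x * ffun_comp y.
Proof. by apply/ffunP=> i; rewrite !ffunE. Qed.

Lemma ffun_compZ (r : R) x : ffun_comp (r *: x) = r *: ffun_comp x.
Proof. by apply/ffunP=> i; rewrite !ffunE. Qed.

Lemma in_subalg_comp (s : seq {ffun 'I_n -> A}) (t : seq {ffun 'I_k -> A}) x :
  {in s, forall y, in_subalg t (ffun_comp y)} ->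
  in_subalg s x -> in_subalg t (ffun_comp x).
Proof.
move=> st; elim=> {x} [y /st //| | x y _ tx _ ty | x y _ tx _ ty | r x _ tx].
- by rewrite ffun_comp1; apply: sa_one.
- by rewrite ffun_compD; apply: sa_add.
- by rewrite ffun_compM; apply: sa_mul.
- by rewrite ffun_compZ; apply: sa_scale.
Qed.

End Reindexing.

Section Gluing.
Variables (R : comPzRingType) (A : algType R) (k : nat).

Definition ffun_indicator (P : pred 'I_k) : {ffun 'I_k -> A} :=
  [ffun i => if P i then 1 else 0].

Lemma ffun_glue (P : pred 'I_k) (x y : {ffun 'I_k -> A}) :
  (1 - ffun_indicator P) * x + ffun_indicator P * y =
  [ffun i => if P i then y i else x i].
Proof.
apply/ffunP=> i; rewrite !ffunE.
by case: (P i); rewrite ?subrr ?subr0 !(mul0r, mul1r) ?add0r ?addr0.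
Qed.

End Gluing.

Section ExtraCopy.
Variables (R : comPzRingType) (A : algType R) (n : nat).

Definition dup_last (i : 'I_n.+2) : 'I_n.+1 := inord (minn i n).

Lemma gen_by_succ m : gen_by A n.+1 m -> gen_by A n.+2 m.+1.
Proof.
case=> s [sz_s gen_s].
pose e : {ffun 'I_n.+2 -> A} := ffun_indicator A (pred1 ord_max).
pose t := e :: map (ffun_comp dup_last) s.
exists t; split; first by rewrite /= size_map.
have t_comp x : in_subalg t (ffun_comp dup_last x).
  apply: in_subalg_comp (gen_s x) => y s_y.
  by apply: sa_gen; rewrite inE map_f ?orbT.
have t_e : in_subalg t e by apply: sa_gen; rewrite inE eqxx.
move=> z.
pose zl : {ffun 'I_n.+1 -> A} := [ffun j => z (widen_ord (leqnSn _) j)].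
pose zr : {ffun 'I_n.+1 -> A} := [ffun=> z ord_max].
have -> : z = (1 - e) * ffun_comp dup_last zl + e * ffun_comp dup_last zr.
  rewrite ffun_glue; apply/ffunP=> i; rewrite !ffunE /=.
  case: eqP => [-> // | /eqP ne_i]; congr (z _); apply/val_inj => /=.
  have le_in : (i <= n)%N.
    rewrite -ltnS ltn_neqAle -ltnS ltn_ord andbT.
    by apply: contra ne_i => /eqP i_n; apply/eqP/val_inj.
  by rewrite /dup_last (minn_idPl le_in) inordK // ltnS.
have t_1e : in_subalg t (1 - e) by apply: in_subalg_sub => //; apply: sa_one.
exact: sa_add (sa_mul t_1e (t_comp zl)) (sa_mul t_e (t_comp zr)).
Qed.

End ExtraCopy.

Theorem mainTheorem8 (R : comPzRingType) (A : algType R) (m : nat) :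
  (0 < m)%N ->
  (forall n : nat, (0 < n)%N -> gen_by A n m -> gen_by A n.+1 m.+1) /\
  (forall k : nat, (0 < k)%N -> gen_eq A m k -> min_gens A k.+1 m.+1).
Proof.
move=> _.
have succ_gen n : (0 < n)%N -> gen_by A n m -> gen_by A n.+1 m.+1.
  by case: n => // n _; apply: gen_by_succ.
split=> // k k_gt0 [gen_k max_k]; split; first exact: succ_gen.
move=> g lt_gm gen_g; apply: (max_k k.+1 (ltnSn k)).
exact: gen_by_leq gen_g.
Qed.
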